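(* In the setting described in the context, let $i\in\mathcal V$ and let $z_{-i}=(z_j)_{j\ne i}$ satisfy $z_j<1$ for all $j\ne i$. Then the best response set of agent $i$ is the singleton $$\mathcal B_i(z_{-i})=\left\{\left[1-\frac{A_i(z_{-i})\pi_i\sigma_i^2}{B_i(z_{-i})}\right]_+\right\},$$ where $[a]_+=\max\{a,0\}$, $A_i(z_{-i})=\sum_{j\ne i}\frac{\pi_j}{1-z_j}$ and $B_i(z_{-i})=\sum_{j\ne i}\frac{\pi_j^2\sigma_j^2}{(1-z_j)^2}$. In particular $\mathcal B_i(z_{-i})\subseteq[0,1)$.
   Context: Let $n\ge2$ and $\mathcal V=\{1,\dots,n\}$. Let $P\in\mathbb{R}^{n\times n}$ be a row-stochastic, irreducible, aperiodic matrix (the graph on $\mathcal V$ with edge $(i,j)$ iff $P_{ij}>0$ is strongly connected with gcd of cycle lengths $1$) and $\pi$ the unique probability vector with $P'\pi=\pi$. For $z\in[0,1]^n$, $W(z)=(I-[z])P+[z]$ ($[z]$ the diagonal matrix with diagonal $z$) and $H(z)=\lim_{t\to\infty}W(z)^t$ (the limit exists and is row-stochastic). Let $\sigma_1^2,\dots,\sigma_n^2>0$. Agent $i$'s cost is $\upsilon_i(z)=\sum_jH_{ij}(z)^2\sigma_j^2$, written $\upsilon_i(z_i,z_{-i})$, and her best response set is $\mathcal B_i(z_{-i})=\arg\min_{z_i\in[0,1]}\upsilon_i(z_i,z_{-i})$. *)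

From HB Require Import structures.
From mathcomp Require Import all_boot all_order all_algebra.
From mathcomp Require Import all_classical all_reals all_analysis.
Set Implicit Arguments. Unset Strict Implicit. Unset Printing Implicit Defensive.
Import Order.TTheory GRing.Theory Num.Theory.
Local Open Scope ring_scope.
Local Open Scope classical_set_scope.

Section Defs.
Variables (R : realType) (n : nat).

Definition row_stochastic (P : 'M[R]_n) : Prop :=
  (forall i j, 0 <= P i j) /\ (forall i, \sum_j P i j = 1).

Definition Pgraph (P : 'M[R]_n) : rel 'I_n := fun i j => 0 < P i j.

Definition irreducible_mx (P : 'M[R]_n) : Prop :=
  forall i j, connect (Pgraph P) i j.

Definition closed_walk_length (P : 'M[R]_n) (t : nat) : Prop :=
  (0 < t)%N /\ exists f : nat -> 'I_n,
    f 0%N = f t /\ forall k, (k < t)%N -> Pgraph P (f k) (f k.+1).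

Definition aperiodic_mx (P : 'M[R]_n) : Prop :=
  forall d : nat, (forall t, closed_walk_length P t -> (d %| t)%N) -> d = 1%N.

Definition stationary_dist (P : 'M[R]_n) (pi : 'I_n -> R) : Prop :=
  (forall i, 0 <= pi i) /\ \sum_i pi i = 1 /\
  (forall j, \sum_i pi i * P i j = pi j).

Definition Wmx (P : 'M[R]_n) (z : 'I_n -> R) : 'M[R]_n :=
  \matrix_(a, b) ((1 - z a) * P a b + (if a == b then z a else 0)).

Definition Hmx (P : 'M[R]_n) (z : 'I_n -> R) (a b : 'I_n) : R :=
  limn (fun t : nat => (((Wmx P z) ^+ t) a b : R^o)).

(* cost of agent i: sum_j H_ij(z)^2 sigma_j^2, with s j = sigma_j^2 *)
Definition cost (P : 'M[R]_n) (s : 'I_n -> R) (i : 'I_n) (z : 'I_n -> R) : R :=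
  \sum_j (Hmx P z i j) ^+ 2 * s j.

Definition upd (z : 'I_n -> R) (i : 'I_n) (x : R) : 'I_n -> R :=
  fun j => if j == i then x else z j.

Definition best_response (P : 'M[R]_n) (s : 'I_n -> R) (i : 'I_n)
  (z : 'I_n -> R) : set R :=
  [set x | 0 <= x <= 1 /\
     forall y, 0 <= y <= 1 -> cost P s i (upd z i x) <= cost P s i (upd z i y)].

Definition Acoef (pi z : 'I_n -> R) (i : 'I_n) : R :=
  \sum_(j | j != i) pi j / (1 - z j).

Definition Bcoef (pi s z : 'I_n -> R) (i : 'I_n) : R :=
  \sum_(j | j != i) pi j ^+ 2 * s j / (1 - z j) ^+ 2.

Definition pospart (a : R) : R := Num.max a 0.

End Defs.

(* For x = z_i < 1 the matrix W(z) is row-stochastic, dominates a positive multiple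
   of P, and has the stationary vector nu_j = pi_j / (1 - z_j).  Since P is primitive
   (the return times to a state form an additive semigroup of gcd 1, hence contain all
   large integers), Doeblin's contraction argument gives H(z) = 1 nu' / sum nu, so the
   cost of agent i is (y^2 s_i + B) / (y + A)^2 with y = pi_i / (1 - x).  For x = 1,
   state i is absorbing and the cost is s_i.  On y >= pi_i this rational function has
   the unique minimiser max(pi_i, B / (A s_i)), where its value is below s_i; mapped
   back to x this is the positive part in the statement. *)

From HB Require Import structures.
From mathcomp Require Import all_boot all_order all_algebra.
From mathcomp Require Import all_classical all_reals all_analysis.
From mathcomp Require Import lra ring zify.
Import Order.TTheory GRing.Theory Num.Theory.
Import numFieldNormedType.Exports.
Set Implicit Arguments. Unset Strict Implicit. Unset Printing Implicit Defensive.

Section NumericalSemigroup.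
Variable T : pred nat.
Hypothesis T0 : T 0.
Hypothesis TD : forall a b, T a -> T b -> T (a + b).
Hypothesis T_gcd1 : forall d, (forall t, T t -> d %| t) -> d = 1%N.

Lemma semigroup_mul k a : T a -> T (k * a).
Proof.
by move=> Ta; elim: k => [|k IH]; rewrite ?mul0n // mulSn; apply: TD.
Qed.

Fixpoint gcd_upto N :=
  if N is N'.+1 then (if T N' then gcdn (gcd_upto N') N' else gcd_upto N') else 0.

Lemma gcd_upto_dvd N t : t < N -> T t -> gcd_upto N %| t.
Proof.
elim: N => [//|N IH] /=; rewrite ltnS leq_eqVlt => /orP [/eqP ->|ht] Tt.
  by rewrite Tt dvdn_gcdr.
by case: ifP => _; [apply: dvdn_trans (dvdn_gcdl _ _) (IH ht Tt) | apply: IH].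
Qed.

Lemma gcd_upto_dvd_mono N M : N <= M -> gcd_upto M %| gcd_upto N.
Proof.
move/subnK <-; elim: (M - N) => [|k IH] //=.
by case: ifP => _ //; apply: dvdn_trans (dvdn_gcdl _ _) IH.
Qed.

Lemma gcd_upto_bezout N : exists p q, [/\ T p, T q & p = q + gcd_upto N].
Proof.
elim: N => [|N [p [q [Tp Tq pE]]]] /=; first by exists 0, 0.
case: ifP => TN; last by exists p, q.
have [->|g_gt0] := posnP (gcd_upto N); first by exists N, 0; rewrite gcd0n.
have [u v uvE _] := egcdnP N g_gt0.
exists (u * p), (u * q + v * N); split.
- exact: semigroup_mul.
- by apply: TD; apply: semigroup_mul.
- by rewrite pE mulnDr uvE addnA.
Qed.

Lemma gcd_upto_descent N : 0 < gcd_upto N -> gcd_upto N != 1 ->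
  exists2 M, 0 < gcd_upto M & gcd_upto M < gcd_upto N.
Proof.
move=> g_gt0 g_neq1.
have [all_dvd|/existsNP [t /not_implyP [Tt g_ndvd]]] :=
  pselect (forall t, T t -> gcd_upto N %| t).
  by rewrite (T_gcd1 all_dvd) in g_neq1.
have gM_dvd : gcd_upto (maxn N t.+1) %| gcd_upto N.
  exact/gcd_upto_dvd_mono/leq_maxl.
exists (maxn N t.+1); first exact: dvdn_gt0 g_gt0 gM_dvd.
rewrite ltn_neqAle (dvdn_leq g_gt0 gM_dvd) andbT.
apply: contra_not_neq g_ndvd => <-; apply: gcd_upto_dvd Tt.
by rewrite leq_max ltnSn orbT.
Qed.

Lemma gcd_upto_eq1 : exists N, gcd_upto N = 1.
Proof.
have [all0|/existsNP [t /not_implyP [Tt t_ndvd]]] := pselect (forall t, T t -> 0 %| t).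
  by have := T_gcd1 all0.
have g_gt0 : 0 < gcd_upto t.+1.
  by apply: dvdn_gt0 (gcd_upto_dvd (ltnSn t) Tt); rewrite lt0n -dvd0n; apply/negP.
suff: forall g N, gcd_upto N = g -> 0 < g -> exists N', gcd_upto N' = 1.
  by move=> /(_ _ _ erefl g_gt0).
elim/ltn_ind => g IH N gE {}g_gt0; subst g.
have [g1|g_neq1] := eqVneq (gcd_upto N) 1; first by exists N.
have [M M_gt0 M_lt] := gcd_upto_descent g_gt0 g_neq1.
exact: IH M_lt M erefl M_gt0.
Qed.

Lemma semigroup_eventually : exists N0, forall t, N0 <= t -> T t.
Proof.
have [N gN] := gcd_upto_eq1; have [p [q [Tp Tq]]] := gcd_upto_bezout N.
rewrite gN => pE.
have [q0|q_gt0] := posnP q.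
  by exists 0 => t _; rewrite -[t]muln1; move: Tp; rewrite pE q0; apply: semigroup_mul.
exists (q * q) => t t_ge.
(* t = a q + r with r < q <= a, so t = (a - r) q + r (q + 1) *)
have -> : t = (t %/ q - t %% q) * q + t %% q * p.
  have := divn_eq t q; have := ltn_pmod t q_gt0.
  have : q <= t %/ q by rewrite leq_divRL.
  set a := t %/ q; set r := t %% q; rewrite pE; nia.
by apply: TD; apply: semigroup_mul.
Qed.
End NumericalSemigroup.

Local Open Scope classical_set_scope.
Local Open Scope ring_scope.

Section NonnegMatrixPowers.
Variables (R : numDomainType) (n : nat).
Implicit Types A B : 'M[R]_n.

Definition nonneg_mx A := forall a b, 0 <= A a b.

Lemma mx_mulE A B a b : (A * B) a b = \sum_k A a k * B k b.
Proof. by rewrite -mulmxE mxE. Qed.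

Lemma mx_exprS A t a b : (A ^+ t.+1) a b = \sum_k A a k * (A ^+ t) k b.
Proof. by rewrite exprS mx_mulE. Qed.

Lemma mx_expr0_gt0 A a : 0 < (A ^+ 0) a a.
Proof. by rewrite expr0 mxE eqxx ltr01. Qed.

Lemma nonneg_mx_exp A t : nonneg_mx A -> nonneg_mx (A ^+ t).
Proof.
move=> A_ge0; elim: t => [|t IH] a b; first by rewrite expr0 mxE ler0n.
by rewrite mx_exprS; apply: sumr_ge0 => k _; apply: mulr_ge0.
Qed.

Lemma mx_exprD_ge A k j a c b : nonneg_mx A ->
  (A ^+ k) a c * (A ^+ j) c b <= (A ^+ (k + j)) a b.
Proof.
move=> A_ge0; rewrite exprD mx_mulE (bigD1 c) //= lerDl.
by apply: sumr_ge0 => l _; apply: mulr_ge0; apply: nonneg_mx_exp.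
Qed.

Lemma mx_exprD_gt0 A k j a c b : nonneg_mx A ->
  0 < (A ^+ k) a c -> 0 < (A ^+ j) c b -> 0 < (A ^+ (k + j)) a b.
Proof.
move=> A_ge0 ac_gt0 cb_gt0.
by apply: lt_le_trans (mx_exprD_ge k j a c b A_ge0); apply: mulr_gt0.
Qed.

Lemma mx_expr_diag_ge A t c : nonneg_mx A -> A c c ^+ t <= (A ^+ t) c c.
Proof.
move=> A_ge0; elim: t => [|t IH]; first by rewrite !expr0 mxE eqxx.
apply: le_trans (mx_exprD_ge 1 t c c c A_ge0); rewrite expr1 exprS.
by apply: ler_wpM2l.
Qed.

Lemma mx_expr_scale_le A B e t a b : nonneg_mx A -> 0 <= e ->
  (forall a b, e * A a b <= B a b) -> e ^+ t * (A ^+ t) a b <= (B ^+ t) a b.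
Proof.
move=> A_ge0 e_ge0 AB; elim: t a b => [|t IH] a b; first by rewrite expr0 mul1r.
rewrite !mx_exprS exprS mulr_sumr; apply: ler_sum => k _; rewrite mulrACA.
by apply: ler_pM; rewrite ?mulr_ge0 ?exprn_ge0 ?nonneg_mx_exp.
Qed.

Lemma left_invariant_exp A (nu : 'I_n -> R) t b :
  (forall b, \sum_a nu a * A a b = nu b) -> \sum_a nu a * (A ^+ t) a b = nu b.
Proof.
move=> nuA; elim: t b => [|t IH] b.
  rewrite (bigD1 b) //= expr0 mxE eqxx mulr1 big1 ?addr0 // => a ab.
  by rewrite mxE (negbTE ab) mulr0.
under eq_bigr do rewrite exprSr mx_mulE mulr_sumr.
rewrite exchange_big /= -[RHS]nuA; apply: eq_bigr => k _.
by rewrite -IH mulr_suml; apply: eq_bigr => a _; rewrite mulrA.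
Qed.

End NonnegMatrixPowers.

Section StochasticMatrices.
Variables (R : realType) (n : nat).
Implicit Types A Q : 'M[R]_n.

Lemma row_stochastic_exp A t : row_stochastic A -> row_stochastic (A ^+ t).
Proof.
move=> [A_ge0 A_sum1]; split; first exact: nonneg_mx_exp.
elim: t => [|t IH] a.
  rewrite (bigD1 a) //= expr0 mxE eqxx big1 ?addr0 // => b ba.
  by rewrite mxE eq_sym (negbTE ba).
under eq_bigr do rewrite mx_exprS.
rewrite exchange_big /=.
by under eq_bigr do rewrite -mulr_sumr IH mulr1.
Qed.

Lemma row_stochastic_le1 A a b : row_stochastic A -> A a b <= 1.
Proof.
move=> [A_ge0 A_sum1]; rewrite -(A_sum1 a) (bigD1 b) //= lerDl.
by apply: sumr_ge0.
Qed.

Lemma row_stochastic_compl Q a c :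
  row_stochastic Q -> 1 - Q a c = \sum_(k | k != c) Q a k.
Proof. by move=> [_ Q_sum1]; rewrite -(Q_sum1 a) (bigD1 c) //= addrAC subrr add0r. Qed.

Lemma row_avg_le Q a c (u : 'I_n -> R) M : row_stochastic Q ->
  (forall k, u k <= M) -> \sum_k Q a k * u k <= Q a c * u c + (1 - Q a c) * M.
Proof.
move=> Q_st u_le; rewrite (bigD1 c) //= lerD2l row_stochastic_compl // mulr_suml.
by apply: ler_sum => k _; apply: ler_wpM2l => //; apply: Q_st.1.
Qed.

Lemma row_avg_ge Q a c (u : 'I_n -> R) M : row_stochastic Q ->
  (forall k, M <= u k) -> Q a c * u c + (1 - Q a c) * M <= \sum_k Q a k * u k.
Proof.
move=> Q_st u_ge; rewrite (bigD1 c) //= lerD2l row_stochastic_compl // mulr_suml.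
by apply: ler_sum => k _; apply: ler_wpM2l => //; apply: Q_st.1.
Qed.

End StochasticMatrices.

Section Doeblin.
Variables (R : realType) (n : nat) (W : 'M[R]_n) (m : nat) (c : 'I_n).
Hypothesis W_st : row_stochastic W.
Hypothesis Wm_col_gt0 : forall a, 0 < (W ^+ m) a c.

Let colmax b t := \big[Num.max/0]_a (W ^+ t) a b.
Let colmin b t := \big[Num.min/1]_a (W ^+ t) a b.
Let d := \big[Num.min/1]_a (W ^+ m) a c.

Let Wt_st t : row_stochastic (W ^+ t). Proof. exact: row_stochastic_exp. Qed.

Lemma colmin_le_colmax t a b : colmin b t <= (W ^+ t) a b <= colmax b t.
Proof.
by apply/andP; split; [apply: bigmin_le | apply: (le_bigmax _ (fun k => (W ^+ t) k b))].
Qed.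

Lemma colmax_le1 b t : colmax b t <= 1.
Proof. by apply: bigmax_le => // a _; apply: row_stochastic_le1. Qed.

Lemma colmin_ge0 b t : 0 <= colmin b t.
Proof. by apply: le_bigmin => // a _; apply: (Wt_st t).1. Qed.

Lemma colmax_mono b s t : colmax b (s + t) <= colmax b t.
Proof.
apply: bigmax_le => [|a _]; first exact: bigmax_ge_id.
rewrite exprD mx_mulE -[leRHS]mul1r -((Wt_st s).2 a) mulr_suml.
apply: ler_sum => k _; apply: ler_wpM2l; first exact: (Wt_st s).1.
by case/andP: (colmin_le_colmax t k b).
Qed.

Lemma colmin_mono b s t : colmin b t <= colmin b (s + t).
Proof.
apply: le_bigmin => [|a _]; first exact: bigmin_le_id.
rewrite exprD mx_mulE -[leLHS]mul1r -((Wt_st s).2 a) mulr_suml.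
apply: ler_sum => k _; apply: ler_wpM2l; first exact: (Wt_st s).1.
by case/andP: (colmin_le_colmax t k b).
Qed.

Lemma osc_contract b t :
  colmax b (m + t) - colmin b (m + t) <= (1 - d) * (colmax b t - colmin b t).
Proof.
have d_gt0 : 0 < d by apply: lt_bigmin.
have d_le a : d <= (W ^+ m) a c by apply: bigmin_le.
have d_le1 : d <= 1 by apply: bigmin_le_id.
have col_bd k := colmin_le_colmax t k b.
have /andP[min_le le_max] := col_bd c.
have Wc_ge0 : 0 <= (W ^+ t) c b by apply: (Wt_st t).1.
have Wc_le1 : (W ^+ t) c b <= 1 by apply: row_stochastic_le1.
have max_ge0 : 0 <= colmax b t by apply: bigmax_ge_id.
have min_le1 : colmin b t <= 1 by apply: bigmin_le_id.
have max_up : colmax b (m + t) <= (1 - d) * colmax b t + d * (W ^+ t) c b.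
  apply: bigmax_le => [|a _]; first nra.
  rewrite exprD mx_mulE.
  apply: le_trans (row_avg_le a c (u := (W ^+ t)^~ b) (M := colmax b t) (Wt_st m) _) _.
    by move=> k; case/andP: (col_bd k).
  have := d_le a; have := (Wt_st m).1 a c; nra.
have min_low : (1 - d) * colmin b t + d * (W ^+ t) c b <= colmin b (m + t).
  apply: le_bigmin => [|a _]; first nra.
  rewrite exprD mx_mulE.
  apply: le_trans _ (row_avg_ge a c (u := (W ^+ t)^~ b) (M := colmin b t) (Wt_st m) _).
    have := d_le a; have := row_stochastic_le1 a c (Wt_st m); nra.
  by move=> k; case/andP: (col_bd k).
lra.
Qed.

Lemma osc_le_geom b k t : (k * m <= t)%N -> colmax b t - colmin b t <= (1 - d) ^+ k.
Proof.
have d_le1 : d <= 1 by apply: bigmin_le_id.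
move=> /subnK <-; apply: le_trans (_ : _ <= colmax b (k * m) - colmin b (k * m)) _.
  by apply: lerB; [apply: colmax_mono | apply: colmin_mono].
elim: k => [|k IH].
  by rewrite mul0n expr0; have := colmax_le1 b 0; have := colmin_ge0 b 0; lra.
rewrite mulSn exprS; apply: le_trans (osc_contract _ _) _.
by apply: ler_wpM2l => //; lra.
Qed.

Variable nu : 'I_n -> R.
Hypothesis nu_ge0 : forall a, 0 <= nu a.
Hypothesis nu_sum_gt0 : 0 < \sum_a nu a.
Hypothesis nu_inv : forall b, \sum_a nu a * W a b = nu b.

Lemma stationary_in_col b t : colmin b t <= nu b / \sum_a nu a <= colmax b t.
Proof.
rewrite ler_pdivlMr // ler_pdivrMr // -(left_invariant_exp t b nu_inv) !mulr_sumr.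
apply/andP; split; apply: ler_sum => a _; have /andP[lo hi] := colmin_le_colmax t a b.
- by rewrite mulrC ler_wpM2l.
- by rewrite [leRHS]mulrC ler_wpM2l.
Qed.

Lemma exp_entry_cvg a b : (fun t => (W ^+ t) a b) @ \oo --> nu b / \sum_a nu a.
Proof.
have d_gt0 : 0 < d by apply: lt_bigmin.
have d_le1 : d <= 1 by apply: bigmin_le_id.
apply/cvgrPdist_le => e e_gt0.
have [k dk_le] : exists k, (1 - d) ^+ k <= e.
  have /cvgrPdist_le/(_ e e_gt0) [k _ dk_le] : (fun k => (1 - d) ^+ k) @ \oo --> 0.
    by apply: cvg_expr; rewrite ger0_norm; lra.
  by exists k; have := dk_le k (leqnn k); rewrite sub0r normrN; apply: le_trans; apply: ler_norm.
near=> t.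
have /andP[? ?] := colmin_le_colmax t a b.
have /andP[? ?] := stationary_in_col b t.
have : (k * m <= t)%N by near: t; apply: nbhs_infty_ge.
move=> /(osc_le_geom b) osc_le; rewrite ler_norml; apply/andP; split; lra.
Unshelve. all: by end_near.
Qed.

Lemma lim_exp_entry a b :
  limn (fun t => ((W ^+ t) a b : R^o)) = nu b / \sum_a nu a.
Proof. exact/cvg_lim/exp_entry_cvg. Qed.

End Doeblin.

Section PositivePowers.
Variables (R : realType) (n : nat).
Implicit Types A B : 'M[R]_n.

(* B only has to dominate A off row c: a path to c is stopped at its first visit to c. *)
Lemma connect_exp_gt0 A B a c : nonneg_mx B ->
  (forall u v, u != c -> Pgraph A u v -> 0 < B u v) ->
  connect (Pgraph A) a c -> exists k, 0 < (B ^+ k) a c.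
Proof.
move=> B_ge0 AB /connectP [p]; elim: p a => [|x p IH] a /=.
  by move=> _ ->; exists 0%N; apply: mx_expr0_gt0.
move=> /andP [ax xp] pc; have [->|ac] := eqVneq a c.
  by exists 0%N; apply: mx_expr0_gt0.
have [k xc] := IH x xp pc; exists (1 + k)%N.
by apply: mx_exprD_gt0 B_ge0 _ xc; rewrite expr1; apply: AB.
Qed.

Lemma walk_exp_gt0 A (f : nat -> 'I_n) t k : nonneg_mx A ->
  (forall k, (k < t)%N -> Pgraph A (f k) (f k.+1)) ->
  (k <= t)%N -> 0 < (A ^+ k) (f 0%N) (f k).
Proof.
move=> A_ge0 f_walk; elim: k => [|k IH] kt; first exact: mx_expr0_gt0.
rewrite -addn1; apply: mx_exprD_gt0 A_ge0 (IH (ltnW kt)) _.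
by rewrite expr1 addn1; apply: f_walk.
Qed.

Lemma column_exp_gt0 B c : nonneg_mx B ->
  (forall a, exists k, 0 < (B ^+ k) a c) ->
  (exists N0, forall t, (N0 <= t)%N -> 0 < (B ^+ t) c c) ->
  exists m, forall a, 0 < (B ^+ m) a c.
Proof.
move=> B_ge0 reach_c [N0 return_c].
pose k a := ex_minn (reach_c a).
have k_gt0 a : 0 < (B ^+ k a) a c by rewrite /k; case: ex_minnP.
exists (\max_a k a + N0)%N => a.
have k_le : (k a <= \max_a k a)%N by apply: leq_bigmax.
rewrite -(subnKC (leq_trans k_le (leq_addr N0 _))) /=.
by apply: mx_exprD_gt0 B_ge0 (k_gt0 a) _; apply: return_c; rewrite -addnBAC ?leq_addl.
Qed.

Section IrreducibleAperiodic.
Variable P : 'M[R]_n.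
Hypotheses (P_ge0 : nonneg_mx P) (P_irr : irreducible_mx P).

Lemma irreducible_exp_gt0 a b : exists k, 0 < (P ^+ k) a b.
Proof. by apply: connect_exp_gt0 P_ge0 _ (P_irr a b). Qed.

Lemma stationary_dist_gt0 pi b : stationary_dist P pi -> 0 < pi b.
Proof.
move=> [pi_ge0 [pi_sum1 pi_inv]].
have [a /andP[_ pia_gt0]] : exists a, true && (0 < pi a).
  by apply: psumr_neq0P => //; rewrite pi_sum1; apply/eqP; exact: oner_neq0.
have [k Pk_gt0] := irreducible_exp_gt0 a b.
rewrite -(left_invariant_exp k b pi_inv) (bigD1 a) //=.
apply: ltr_pwDl; first exact: mulr_gt0.
by apply: sumr_ge0 => a' _; apply: mulr_ge0 => //; apply: nonneg_mx_exp.
Qed.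

Hypothesis P_aper : aperiodic_mx P.

Lemma return_times_gcd1 c d :
  (forall t, 0 < (P ^+ t) c c -> (d %| t)%N) -> d = 1%N.
Proof.
move=> d_dvd; apply: P_aper => t [t_gt0 [f [f0t f_walk]]].
have cycle_gt0 := walk_exp_gt0 P_ge0 f_walk (leqnn t); rewrite -f0t in cycle_gt0.
have [k1 c_to] := irreducible_exp_gt0 c (f 0%N).
have [k2 to_c] := irreducible_exp_gt0 (f 0%N) c.
have dvd_k := d_dvd _ (mx_exprD_gt0 P_ge0 c_to to_c).
have := d_dvd _ (mx_exprD_gt0 P_ge0 (mx_exprD_gt0 P_ge0 c_to cycle_gt0) to_c).
by rewrite addnAC dvdn_addr.
Qed.

Lemma aperiodic_column_exp_gt0 c : exists m, forall a, 0 < (P ^+ m) a c.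
Proof.
apply: column_exp_gt0 P_ge0 (irreducible_exp_gt0^~ c) _.
apply: (semigroup_eventually (T := fun t => 0 < (P ^+ t) c c)).
- exact: mx_expr0_gt0.
- by move=> a b; apply: mx_exprD_gt0.
- exact: return_times_gcd1.
Qed.

End IrreducibleAperiodic.
End PositivePowers.

Section AveragedMatrix.
Variables (R : realType) (n : nat) (P : 'M[R]_n) (z : 'I_n -> R).
Hypothesis P_st : row_stochastic P.
Hypothesis z_bd : forall a, 0 <= z a <= 1.

Lemma Wmx_row_stochastic : row_stochastic (Wmx P z).
Proof.
split=> [a b|a].
  rewrite mxE; have /andP[za_ge0 za_le1] := z_bd a.
  by rewrite addr_ge0 ?mulr_ge0 ?subr_ge0 ?(P_st.1 a b) //; case: eqP.
under eq_bigr do rewrite mxE.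
rewrite big_split /= -mulr_sumr P_st.2 mulr1 (bigD1 a) //= eqxx big1 ?addr0.
  by rewrite subrK.
by move=> b ba; rewrite eq_sym (negbTE ba).
Qed.

Lemma Wmx_ge_scale e : (forall a, e <= 1 - z a) -> forall a b, e * P a b <= Wmx P z a b.
Proof.
move=> e_le a b; rewrite mxE; have /andP[za_ge0 _] := z_bd a.
rewrite -[leLHS]addr0 lerD ?ler_wpM2r ?(P_st.1 a b) //; by case: eqP.
Qed.

Lemma Wmx_left_invariant (pi : 'I_n -> R) :
  (forall b, \sum_a pi a * P a b = pi b) -> (forall a, z a < 1) ->
  forall b, \sum_a pi a / (1 - z a) * Wmx P z a b = pi b / (1 - z b).
Proof.
move=> pi_inv z_lt1 b; under eq_bigr do rewrite mxE mulrDr.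
have z_neq1 a : 1 - z a != 0 by rewrite subr_eq0 eq_sym lt_eqF.
rewrite big_split /=; under eq_bigr do rewrite mulrA divfK //.
rewrite pi_inv (bigD1 b) //= eqxx big1 ?addr0 => [|a ab]; last first.
  by rewrite (negbTE ab) mulr0.
by field; apply: z_neq1.
Qed.

Hypothesis P_irr : irreducible_mx P.

Lemma Hmx_absorbing i : z i = 1 -> (forall a, a != i -> z a < 1) ->
  forall a b, Hmx P z a b = (b == i)%:R.
Proof.
move=> zi1 z_lt1 a b; have [W_ge0 _] := Wmx_row_stochastic.
have Wi b' : Wmx P z i b' = (i == b')%:R.
  by rewrite mxE zi1 subrr mul0r add0r; case: eqP.
have P_to_W u v : u != i -> Pgraph P u v -> 0 < Wmx P z u v.
  move=> ui Puv; rewrite mxE; have /andP[zu_ge0 _] := z_bd u.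
  rewrite ltr_pwDl ?mulr_gt0 ?subr_gt0 ?z_lt1 //; by case: eqP.
have [m Wm_gt0] : exists m, forall a, 0 < (Wmx P z ^+ m) a i.
  apply: (column_exp_gt0 W_ge0).
    by move=> a'; apply: connect_exp_gt0 W_ge0 P_to_W (P_irr a' i).
  exists 0%N => t _; apply: lt_le_trans (mx_expr_diag_ge t i W_ge0).
  by rewrite Wi eqxx expr1n ltr01.
pose nu j : R := (j == i)%:R.
have nu_sum1 : \sum_j nu j = 1.
  by rewrite (bigD1 i) //= big1 ?addr0 /nu ?eqxx // => j /negbTE ->.
have nu_inv b' : \sum_a nu a * Wmx P z a b' = nu b'.
  rewrite (bigD1 i) //= big1 ?addr0 => [|a' /negbTE a'i]; last by rewrite /nu a'i mul0r.
  by rewrite /nu eqxx mul1r Wi eq_sym.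
have nu_ge0 j : 0 <= nu j by rewrite ler0n.
by rewrite /Hmx (lim_exp_entry Wmx_row_stochastic Wm_gt0 nu_ge0 _ nu_inv) nu_sum1 ?divr1.
Qed.

Hypothesis P_aper : aperiodic_mx P.

Lemma Hmx_lt1 pi : stationary_dist P pi -> (forall a, z a < 1) ->
  forall a b, Hmx P z a b = (pi b / (1 - z b)) / \sum_j pi j / (1 - z j).
Proof.
move=> [pi_ge0 [pi_sum1 pi_inv]] z_lt1 a b.
have [m Pm_gt0] := aperiodic_column_exp_gt0 P_st.1 P_irr P_aper b.
pose e := \big[Num.min/1]_a (1 - z a).
have e_gt0 : 0 < e by apply: lt_bigmin => // a' _; rewrite subr_gt0.
have Wm_gt0 a' : 0 < (Wmx P z ^+ m) a' b.
  apply: lt_le_trans (mx_expr_scale_le m a' b P_st.1 (ltW e_gt0) _).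
    by rewrite mulr_gt0 ?exprn_gt0.
  by apply: Wmx_ge_scale => a''; apply: bigmin_le.
have nu_ge0 a' : 0 <= pi a' / (1 - z a').
  by have /andP[_ ?] := z_bd a'; rewrite divr_ge0 ?subr_ge0.
have nu_sum_gt0 : 0 < \sum_a pi a / (1 - z a).
  apply: lt_le_trans ltr01 _; rewrite -[leLHS]pi_sum1; apply: ler_sum => a' _.
  have /andP[za_ge0 _] := z_bd a'; have := pi_ge0 a'.
  rewrite ler_pdivlMr ?subr_gt0 //; nra.
exact: (lim_exp_entry Wmx_row_stochastic Wm_gt0 nu_ge0 nu_sum_gt0
  (Wmx_left_invariant pi_inv z_lt1)).
Qed.
End AveragedMatrix.

Section CostProfile.
Variables (R : realFieldType) (A B s : R).
Hypotheses (A_gt0 : 0 < A) (B_gt0 : 0 < B) (s_gt0 : 0 < s).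

Definition cost_profile y := (y ^+ 2 * s + B) / (y + A) ^+ 2.

Let ystar := B / (A * s).

Let ystar_gt0 : 0 < ystar. Proof. by rewrite divr_gt0 ?mulr_gt0. Qed.

Let ystar_le y : ystar <= y -> 0 < y /\ B <= y * A * s.
Proof.
move=> le_y; split; first exact: lt_le_trans ystar_gt0 le_y.
by move: le_y; rewrite /ystar ler_pdivrMr ?mulr_gt0 // mulrA.
Qed.

Lemma cost_profile_argmin y : 0 < y -> y != ystar ->
  cost_profile ystar < cost_profile y.
Proof.
move=> y_gt0 y_neq; rewrite -subr_gt0.
have yA_gt0 : 0 < y + A by rewrite addr_gt0.
have BA_gt0 : 0 < B + A ^+ 2 * s by rewrite addr_gt0 ?mulr_gt0 ?exprn_gt0.
have -> : cost_profile y - cost_profile ystar =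
    (y * A * s - B) ^+ 2 / ((y + A) ^+ 2 * (B + A ^+ 2 * s)).
  rewrite /cost_profile /ystar; field.
  by rewrite !lt0r_neq0 ?mulr_gt0 ?addr_gt0 ?divr_gt0 ?mulr_gt0.
apply: divr_gt0; last by rewrite mulr_gt0 ?exprn_gt0.
rewrite exprn_even_gt0 //= subr_eq0.
by apply: contraNneq y_neq => yE; apply/eqP; rewrite /ystar -yE; field; rewrite !lt0r_neq0.
Qed.

Lemma cost_profile_increasing y1 y2 : ystar <= y1 -> y1 < y2 ->
  cost_profile y1 < cost_profile y2.
Proof.
move=> /ystar_le[y1_gt0 B_le] lt12; have y2_gt0 := lt_trans y1_gt0 lt12.
rewrite -subr_gt0.
have -> : cost_profile y2 - cost_profile y1 = (y2 - y1) *
    (s * A * (2 * y1 * y2 + A * (y1 + y2)) - B * (y1 + y2 + 2 * A)) /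
    ((y1 + A) ^+ 2 * (y2 + A) ^+ 2).
  by rewrite /cost_profile; field; rewrite !lt0r_neq0 ?addr_gt0.
apply: divr_gt0; last by rewrite mulr_gt0 ?exprn_gt0 ?addr_gt0.
apply: mulr_gt0; first by rewrite subr_gt0.
(* s A (2 y1 y2 + A (y1 + y2)) - y1 A s (y1 + y2 + 2 A) = s A (y2 - y1) (y1 + A) *)
have : B * (y1 + y2 + 2 * A) <= y1 * A * s * (y1 + y2 + 2 * A).
  by rewrite ler_wpM2r // addr_ge0 ?mulr_ge0 ?ltW ?addr_gt0.
have : 0 < s * A * ((y2 - y1) * (y1 + A)) by rewrite !mulr_gt0 ?subr_gt0 ?addr_gt0.
nra.
Qed.

Lemma cost_profile_lt y : ystar <= y -> cost_profile y < s.
Proof.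
move=> /ystar_le[y_gt0 B_le].
rewrite /cost_profile ltr_pdivrMr ?exprn_gt0 ?addr_gt0 //.
have : 0 < y * A * s by rewrite !mulr_gt0.
have : 0 < A * A * s by rewrite !mulr_gt0.
rewrite !expr2; nra.
Qed.

Lemma cost_profile_argmin_ge p : 0 < p ->
  cost_profile (Num.max p ystar) < s /\
  forall y, p <= y -> y != Num.max p ystar ->
    cost_profile (Num.max p ystar) < cost_profile y.
Proof.
move=> p_gt0; split; first by apply: cost_profile_lt; rewrite le_max lexx orbT.
move=> y p_le y_neq; have [p_le_ystar|ystar_lt_p] := leP p ystar.
  rewrite max_r // in y_neq *.
  by apply: cost_profile_argmin => //; apply: lt_le_trans p_le.
rewrite max_l ?ltW // in y_neq *.
by apply: cost_profile_increasing; rewrite ?ltW // lt_neqAle eq_sym y_neq.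
Qed.

End CostProfile.

Lemma pospart_1_subr_div (R : realType) (p q : R) : 0 < p -> 0 < q ->
  pospart (1 - p / q) = 1 - p / Num.max p q.
Proof.
move=> p_gt0 q_gt0; rewrite /pospart; have [p_le|q_lt] := leP p q.
  by rewrite max_l // subr_ge0 ler_pdivrMr ?mul1r.
rewrite divff ?gt_eqF // subrr max_r //.
by rewrite subr_le0 ler_pdivlMr ?mul1r // ltW.
Qed.

Lemma sumr_neq_gt0 (R : numDomainType) (n : nat) (i : 'I_n) (F : 'I_n -> R) :
  (1 < n)%N -> (forall k, k != i -> 0 < F k) -> 0 < \sum_(k | k != i) F k.
Proof.
move=> n_gt1 F_gt0.
have [j ji] : exists j : 'I_n, j != i.
  have [i0|i_neq0] := eqVneq (val i) 0%N.
    by exists (Ordinal n_gt1); rewrite -val_eqE /= i0.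
  by exists (Ordinal (ltn_trans (ltn0Sn 0) n_gt1)); rewrite -val_eqE /= eq_sym.
rewrite (bigD1 j) //=; apply: ltr_pwDl; first exact: F_gt0.
by apply: sumr_ge0 => k /andP[ki _]; apply/ltW/F_gt0.
Qed.

Lemma best_response_strict_min (R : realType) (n : nat) (P : 'M[R]_n)
    (s : 'I_n -> R) (i : 'I_n) (z : 'I_n -> R) x0 :
  0 <= x0 <= 1 ->
  (forall y, 0 <= y <= 1 -> y != x0 -> cost P s i (upd z i x0) < cost P s i (upd z i y)) ->
  best_response P s i z = [set x0].
Proof.
move=> x0_in x0_min; apply/seteqP; split => [x [x_in x_le]|x ->] /=.
  apply/eqP; apply: contraT => x_neq.
  by have := x_le x0 x0_in; rewrite leNgt x0_min.
split=> // y y_in; have [->|y_neq] := eqVneq y x0; first exact: lexx.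
exact/ltW/x0_min.
Qed.

Section BestResponse.
Variables (R : realType) (n : nat) (P : 'M[R]_n) (pi s z : 'I_n -> R) (i : 'I_n).
Hypotheses (P_st : row_stochastic P) (P_irr : irreducible_mx P).
Hypothesis z_bd : forall j, j != i -> 0 <= z j /\ z j < 1.

Lemma upd_eq x : upd z i x i = x.
Proof. by rewrite /upd eqxx. Qed.

Lemma upd_neq x j : j != i -> upd z i x j = z j.
Proof. by rewrite /upd => /negbTE ->. Qed.

Let upd_bd x : 0 <= x <= 1 -> forall j, 0 <= upd z i x j <= 1.
Proof.
move=> x_in j; have [->|ji] := eqVneq j i; first by rewrite upd_eq.
by rewrite upd_neq //; have [-> /ltW ->] := z_bd ji.
Qed.

Lemma cost_upd1 : cost P s i (upd z i 1) = s i.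
Proof.
have H_eq j : Hmx P (upd z i 1) i j = (j == i)%:R.
  have one_in : 0 <= (1 : R) <= 1 by rewrite ler01 lexx.
  apply: (Hmx_absorbing P_st (upd_bd one_in) P_irr); first exact: upd_eq.
  by move=> a ai; rewrite upd_neq //; case: (z_bd ai).
rewrite /cost (bigD1 i) //= H_eq eqxx expr1n mul1r big1 ?addr0 // => j ji.
by rewrite H_eq (negbTE ji) expr0n mul0r.
Qed.

Hypotheses (P_aper : aperiodic_mx P) (pi_st : stationary_dist P pi).

Lemma cost_upd_lt1 x : 0 <= x < 1 -> cost P s i (upd z i x) =
  cost_profile (Acoef pi z i) (Bcoef pi s z i) (s i) (pi i / (1 - x)).
Proof.
move=> /andP[x_ge0 x_lt1].
have z_lt1 j : upd z i x j < 1.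
  have [->|ji] := eqVneq j i; first by rewrite upd_eq.
  by rewrite upd_neq //; case: (z_bd ji).
have sum_nu : \sum_j pi j / (1 - upd z i x j) = pi i / (1 - x) + Acoef pi z i.
  rewrite (bigD1 i) //= upd_eq; congr (_ + _).
  by apply: eq_bigr => j ji; rewrite upd_neq.
have sum_nu2 : \sum_j (pi j / (1 - upd z i x j)) ^+ 2 * s j =
    (pi i / (1 - x)) ^+ 2 * s i + Bcoef pi s z i.
  rewrite (bigD1 i) //= upd_eq; congr (_ + _).
  by apply: eq_bigr => j ji; rewrite upd_neq // expr_div_n mulrAC.
rewrite /cost /cost_profile -sum_nu -sum_nu2 mulr_suml; apply: eq_bigr => j _.
have x_in : 0 <= x <= 1 by rewrite x_ge0 ltW.
by rewrite (Hmx_lt1 P_st (upd_bd x_in) P_irr P_aper pi_st z_lt1) expr_div_n mulrAC.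
Qed.

Hypotheses (s_gt0 : forall j, 0 < s j) (n_gt1 : (1 < n)%N).

Let pi_gt0 j : 0 < pi j.
Proof. exact: stationary_dist_gt0 P_st.1 P_irr _ _ pi_st. Qed.

Let z_gap j : j != i -> 0 < 1 - z j.
Proof. by move=> /z_bd[_]; rewrite subr_gt0. Qed.

Lemma Acoef_gt0 : 0 < Acoef pi z i.
Proof. by apply: sumr_neq_gt0 => // j ji; rewrite divr_gt0 ?z_gap. Qed.

Lemma Bcoef_gt0 : 0 < Bcoef pi s z i.
Proof. by apply: sumr_neq_gt0 => // j ji; rewrite divr_gt0 ?mulr_gt0 ?exprn_gt0 ?z_gap. Qed.

Lemma cost_upd_strict_min :
  let x0 := pospart (1 - Acoef pi z i * pi i * s i / Bcoef pi s z i) in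
  0 <= x0 < 1 /\
  forall y, 0 <= y <= 1 -> y != x0 -> cost P s i (upd z i x0) < cost P s i (upd z i y).
Proof.
have A_gt0 := Acoef_gt0; have B_gt0 := Bcoef_gt0; have p_gt0 := pi_gt0 i.
move: A_gt0 B_gt0 p_gt0; set A := Acoef pi z i; set B := Bcoef pi s z i.
set p := pi i => A_gt0 B_gt0 p_gt0 x0.
have [y0_lt_s y0_min] := cost_profile_argmin_ge A_gt0 B_gt0 (s_gt0 i) p_gt0.
move: y0_lt_s y0_min; set y0 := Num.max p _ => y0_lt_s y0_min.
have p_le_y0 : p <= y0 by rewrite le_max lexx.
have y0_gt0 : 0 < y0 := lt_le_trans p_gt0 p_le_y0.
have x0E : x0 = 1 - p / y0.
  rewrite /x0 -pospart_1_subr_div ?divr_gt0 ?mulr_gt0 //; congr (pospart (1 - _)).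
  by field; rewrite !lt0r_neq0.
have x0_y0 : p / (1 - x0) = y0.
  by rewrite x0E opprB addrCA subrr addr0 invf_div mulrCA divff ?mulr1 ?gt_eqF.
have x0_in : 0 <= x0 < 1.
  rewrite x0E subr_ge0 ltrBlDr ltrDl divr_gt0 // andbT.
  by rewrite ler_pdivrMr // mul1r.
split=> // y /andP[y_ge0 y_le1] y_neq; rewrite cost_upd_lt1 // x0_y0.
have [->|y_neq1] := eqVneq y 1; first by rewrite cost_upd1.
have y_lt1 : y < 1 by rewrite lt_neqAle y_neq1.
rewrite cost_upd_lt1 ?y_ge0 //; apply: y0_min.
  by rewrite -/p ler_pdivlMr ?subr_gt0 //; nra.
apply: contraNneq y_neq => py_y0; apply/eqP; rewrite x0E -py_y0.
by rewrite -/p; field; rewrite !lt0r_neq0 ?subr_gt0.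
Qed.

End BestResponse.

Theorem proposition3 (R : realType) (n : nat) (P : 'M[R]_n) (pi s : 'I_n -> R)
  (z : 'I_n -> R) (i : 'I_n) :
  (1 < n)%N ->
  row_stochastic P -> irreducible_mx P -> aperiodic_mx P ->
  stationary_dist P pi ->
  (forall j, 0 < s j) ->
  (forall j, j != i -> 0 <= z j /\ z j < 1) ->
  best_response P s i z =
    [set pospart (1 - Acoef pi z i * pi i * s i / Bcoef pi s z i)] /\
  best_response P s i z `<=` [set x | 0 <= x < 1].
Proof.
move=> n_gt1 P_st P_irr P_aper pi_st s_gt0 z_bd.
have [x0_in x0_min] := cost_upd_strict_min P_st P_irr z_bd P_aper pi_st s_gt0 n_gt1.
set x0 := pospart _ in x0_in x0_min *.
rewrite (best_response_strict_min _ x0_min); last by case/andP: x0_in => -> /ltW.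
by split=> // x ->.
Qed.
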